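(* Let $v_1,\dots,v_n\in\mathbb{H}^d$, not all zero, and write $V=[v_1,\dots,v_n]=V_1+V_2j$ with $V_1,V_2\in\mathbb{C}^{d\times n}$. Let $A=\frac1d\sum_j\|v_j\|^2$. The following are equivalent: (i) $V_{\mathbb{C}}=[[v_1]_{\mathbb{C}},\dots,[v_n]_{\mathbb{C}}]=\begin{pmatrix}V_1\\ \overline{V_2}\end{pmatrix}\in\mathbb{C}^{2d\times n}$ is a tight frame for $\mathbb{C}^{2d}$; (ii) $V_1V_1^*=V_2V_2^*=\frac12AI$ and $V_1V_2^T=V_2V_1^T=0$; (iii) $(V_1^*V_1+V_2^T\overline{V_2})^2=\frac12A\,(V_1^*V_1+V_2^T\overline{V_2})$; (iv) $\sum_j\sum_k|\operatorname{Co}_1(\langle v_j,v_k\rangle)|^2=\frac1{2d}\big(\sum_j\|v_j\|^2\big)^2$.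
   Context: Every quaternion (and entrywise every quaternionic vector or matrix) can be written uniquely as $z+wj$ with $z,w$ complex; note $jz=\bar zj$. The map $[\cdot]_{\mathbb{C}}:\mathbb{H}^d\to\mathbb{C}^{2d}$ is $z+wj\mapsto\begin{pmatrix}z\\ \bar w\end{pmatrix}$ ($z,w\in\mathbb{C}^d$), which is $\mathbb{C}$-linear for right scalar multiplication. For $q=z+wj\in\mathbb{H}$ define $\operatorname{Co}_1(q)=z$ and $\operatorname{Co}_2(q)=\bar w$. Inner products are Euclidean, $\langle v,w\rangle=\sum_j\overline{w_j}v_j$, on $\mathbb{H}^d$ and $\mathbb{C}^{2d}$. A sequence $(u_j)$ is a tight frame for $\mathbb{F}^D$ if $\sum_ju_ju_j^*=cI$ for some $c>0$. $A^T$ is the transpose, $A^*$ the conjugate transpose, $\overline{A}$ the entrywise conjugate. *)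

(* Complex numbers: an arbitrary numClosedFieldType C
   (e.g. complex R for R : rcfType), with conjugation z^* . *)
From HB Require Import structures.
From mathcomp Require Import all_boot all_order all_algebra.
Set Implicit Arguments. Unset Strict Implicit. Unset Printing Implicit Defensive.
Import Order.TTheory GRing.Theory Num.Theory.
Local Open Scope ring_scope.

Section Quat.
Variable C : numClosedFieldType.

(* A quaternion q = z + w j is represented by the pair (z, w). *)
Definition quat := (C * C)%type.
Definition qz (q : quat) : C := q.1.
Definition qw (q : quat) : C := q.2.
Definition qzero : quat := (0, 0).
Definition qadd (p q : quat) : quat := (p.1 + q.1, p.2 + q.2).
(* (a + b j)(c + d j) = (a c - b conj d) + (a d + b conj c) j, using j z = conj z j, j^2=-1 *)
Definition qmul (p q : quat) : quat :=
  (p.1 * q.1 - p.2 * (q.2)^*, p.1 * q.2 + p.2 * (q.1)^*).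
Definition qconj (q : quat) : quat := ((q.1)^*, - q.2).

Definition Co1 (q : quat) : C := q.1.
Definition Co2 (q : quat) : C := (q.2)^*.

Definition hdot (d : nat) (v w : 'I_d -> quat) : quat :=
  \big[qadd/qzero]_(i < d) qmul (qconj (w i)) (v i).

Definition hnorm2 (d : nat) (v : 'I_d -> quat) : C :=
  \sum_(i < d) (`|qz (v i)| ^+ 2 + `|qw (v i)| ^+ 2).

Definition toC (d : nat) (v : 'I_d -> quat) : 'cV[C]_(d + d) :=
  col_mx (\col_i qz (v i)) (\col_i (qw (v i))^*).

Definition cmx (m p : nat) (M : 'M[C]_(m, p)) : 'M[C]_(m, p) := map_mx (@Num.conj_op C) M.
Definition adjmx (m p : nat) (M : 'M[C]_(m, p)) : 'M[C]_(p, m) := (cmx M)^T.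

Definition tight_frame (D n : nat) (U : 'M[C]_(D, n)) : Prop :=
  exists c : C, 0 < c /\ U *m adjmx U = c%:M.

End Quat.

From mathcomp Require Import all_boot all_order all_algebra ring.
Import Order.TTheory GRing.Theory Num.Theory.
Local Open Scope ring_scope.
Set Implicit Arguments. Unset Strict Implicit.

(* Let U = V_C (a 2d x n complex matrix), S = U U^* its frame
   operator and G = U^* U its Gram matrix; with c = A/2 we have
   tr S = sum_j ||v_j||^2 = 2d c, and c > 0 as some v_j is nonzero.
   - A tight frame must have bound c (compare traces), so (i) <-> S = c I.
   - Writing U = (V1 ; conj V2), the blocks of S are V1 V1^*, V1 V2^T,
     conj (V2 V1^T), conj (V2 V2^* ); this gives (i) <-> (ii).
   - A Hermitian S with tr S = D c is equal to c I iff tr (S^2) = D c^2,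
     since tr ((S - c I)(S - c I)^* ) = tr (S^2) - D c^2.  As
     tr (S^2) = tr (G^2) and tr G = tr S, this gives S = c I <-> G^2 = c G,
     i.e. (i) <-> (iii), and, since tr (G^2) is the sum of the |G_jk|^2 and
     G_kj = Co1 <v_j, v_k>, also (i) <-> (iv). *)

Section MatrixConjugation.
Variable C : numClosedFieldType.

Lemma cmxE m p (M : 'M[C]_(m, p)) i j : cmx M i j = (M i j)^*.
Proof. by rewrite /cmx mxE. Qed.

Lemma adjmxE m p (M : 'M[C]_(m, p)) i j : adjmx M i j = (M j i)^*.
Proof. by rewrite /adjmx mxE cmxE. Qed.

Lemma cmxK m p (M : 'M[C]_(m, p)) : cmx (cmx M) = M.
Proof. by apply/matrixP=> i j; rewrite !cmxE conjCK. Qed.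

Lemma cmx_inj m p : injective (@cmx C m p).
Proof. exact: can_inj (@cmxK m p). Qed.

Lemma adjmxK m p (M : 'M[C]_(m, p)) : adjmx (adjmx M) = M.
Proof. by apply/matrixP=> i j; rewrite !adjmxE conjCK. Qed.

Lemma cmxM m p q (M : 'M[C]_(m, p)) (N : 'M[C]_(p, q)) :
  cmx (M *m N) = cmx M *m cmx N.
Proof.
apply/matrixP=> i j; rewrite cmxE !mxE rmorph_sum; apply: eq_bigr=> k _.
by rewrite rmorphM !cmxE.
Qed.

Lemma adjmxM m p q (M : 'M[C]_(m, p)) (N : 'M[C]_(p, q)) :
  adjmx (M *m N) = adjmx N *m adjmx M.
Proof. by rewrite /adjmx cmxM trmx_mul. Qed.

Lemma adjmxB m p (M N : 'M[C]_(m, p)) : adjmx (M - N) = adjmx M - adjmx N.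
Proof. by apply/matrixP=> i j; rewrite !(adjmxE, mxE) rmorphB. Qed.

Lemma cmx0 m p : cmx (0 : 'M[C]_(m, p)) = 0.
Proof. by apply/matrixP=> i j; rewrite !(cmxE, mxE) rmorph0. Qed.

Lemma cmx_scalar D (c : C) : c \is Num.real -> cmx (c%:M : 'M_D) = c%:M.
Proof.
move=> cr; apply/matrixP=> i j; rewrite !(cmxE, mxE).
by case: (i == j); rewrite /= ?mulr1n ?mulr0n ?conj_Creal ?rmorph0.
Qed.

Lemma adjmx_scalar D (c : C) : c \is Num.real -> adjmx (c%:M : 'M_D) = c%:M.
Proof. by move=> cr; rewrite /adjmx cmx_scalar // tr_scalar_mx. Qed.

Lemma adjmx_cmx m p (M : 'M[C]_(m, p)) : adjmx (cmx M) = M^T.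
Proof. by rewrite /adjmx cmxK. Qed.

Lemma cmx_trmx m p (M : 'M[C]_(m, p)) : cmx M^T = adjmx M.
Proof. by apply/matrixP=> i j; rewrite !(cmxE, adjmxE, mxE). Qed.

Lemma cmx_adjmx m p (M : 'M[C]_(m, p)) : cmx (adjmx M) = M^T.
Proof. by rewrite -cmx_trmx cmxK. Qed.

Lemma adjmx_col_mx m1 m2 p (X : 'M[C]_(m1, p)) (Y : 'M[C]_(m2, p)) :
  adjmx (col_mx X Y) = row_mx (adjmx X) (adjmx Y).
Proof. by rewrite /adjmx /cmx map_col_mx tr_col_mx. Qed.

End MatrixConjugation.

Section FrameOperator.
Variable C : numClosedFieldType.

Definition frameop m p (U : 'M[C]_(m, p)) : 'M[C]_m := U *m adjmx U.
Definition gram m p (U : 'M[C]_(m, p)) : 'M[C]_p := adjmx U *m U.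

Lemma frameop_adj m p (U : 'M[C]_(m, p)) : adjmx (frameop U) = frameop U.
Proof. by rewrite /frameop adjmxM adjmxK. Qed.

Lemma gram_adj m p (U : 'M[C]_(m, p)) : adjmx (gram U) = gram U.
Proof. by rewrite /gram adjmxM adjmxK. Qed.

Lemma trace_frameop m p (X : 'M[C]_(m, p)) :
  \tr (frameop X) = \sum_i \sum_j `|X i j| ^+ 2.
Proof.
rewrite /mxtrace; apply: eq_bigr=> i _; rewrite mxE; apply: eq_bigr=> j _.
by rewrite adjmxE normCK.
Qed.

Lemma trace_frameop_eq0 m p (X : 'M[C]_(m, p)) : \tr (frameop X) = 0 -> X = 0.
Proof.
have sq_ge0 i j : 0 <= `|X i j| ^+ 2 by rewrite exprn_ge0.
rewrite trace_frameop => /psumr_eq0P-/(_ (fun i _ => sumr_ge0 _ (fun j _ => sq_ge0 i j))) h.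
apply/matrixP=> i j; rewrite mxE.
have /psumr_eq0P/(_ j isT) : \sum_j `|X i j| ^+ 2 = 0 by exact: h.
by move=> /(_ (fun j _ => sq_ge0 i j)) /eqP; rewrite expf_eq0 /= normr_eq0 => /eqP.
Qed.

(* A Hermitian M with tr M = D c (c real) equals c I iff tr (M^2) = D c^2:
   the difference is tr ((M - c I)(M - c I)^* ). *)
Lemma hermitian_scalarP D (M : 'M[C]_D) (c : C) :
  adjmx M = M -> c \is Num.real -> \tr M = D%:R * c ->
  M = c%:M <-> \tr (M *m M) = D%:R * c ^+ 2.
Proof.
move=> herM cr trM; split.
  by move=> ->; rewrite mul_scalar_mx scale_scalar_mx mxtrace_scalar mulr_natl expr2.
move=> trM2; apply/eqP; rewrite -subr_eq0; apply/eqP; apply: trace_frameop_eq0.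
rewrite /frameop adjmxB herM adjmx_scalar // mulmxBl !mulmxBr !mul_mx_scalar.
rewrite !linearB /= !mxtraceZ trM2 trM mul_scalar_mx mxtraceZ trM mxtrace_scalar.
by rewrite -mulr_natl; ring.
Qed.

Lemma trace_gram m p (U : 'M[C]_(m, p)) : \tr (gram U) = \tr (frameop U).
Proof. exact: mxtrace_mulC. Qed.

Lemma trace_frameop_sq m p (U : 'M[C]_(m, p)) :
  \tr (frameop U *m frameop U) = \tr (gram U *m gram U).
Proof. by rewrite /frameop /gram !mulmxA mxtrace_mulC !mulmxA. Qed.

Section ScalarFrameOperator.
Variables (D p : nat) (U : 'M[C]_(D, p)) (c : C).
Hypothesis c_real : c \is Num.real.
Hypothesis trace_U : \tr (frameop U) = D%:R * c.

Lemma tight_frameE : (0 < D)%N -> 0 < c -> tight_frame U <-> frameop U = c%:M.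
Proof.
move=> D_gt0 c_gt0; split; last by move=> h; exists c.
case=> c' [_ UU]; move: trace_U; rewrite /frameop UU mxtrace_scalar -[c' *+ D]mulr_natl.
by move/mulfI => -> //; rewrite pnatr_eq0 -lt0n.
Qed.

Lemma frameop_scalar_gram_sq :
  frameop U = c%:M <-> gram U *m gram U = c *: gram U.
Proof.
split=> [UU | GG].
  by rewrite /gram mulmxA -(mulmxA (adjmx U)) -/(frameop U) UU mul_mx_scalar scalemxAl.
apply/(hermitian_scalarP (frameop_adj U) c_real trace_U).
by rewrite trace_frameop_sq GG mxtraceZ trace_gram trace_U mulrCA expr2.
Qed.

Lemma frameop_scalar_gram_norm :
  frameop U = c%:M <-> \sum_j \sum_k `|gram U j k| ^+ 2 = D%:R * c ^+ 2.
Proof.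
rewrite (hermitian_scalarP (frameop_adj U) c_real trace_U) trace_frameop_sq.
by rewrite -{2}(gram_adj U) -trace_frameop.
Qed.

End ScalarFrameOperator.

(* For U = (X ; conj Y) the blocks of U U^* are X X^*, X Y^T, conj (Y X^T)
   and conj (Y Y^* ), so U U^* = c I splits into four conditions. *)
Lemma frameop_col_mx_cmx m1 m2 p (X : 'M[C]_(m1, p)) (Y : 'M[C]_(m2, p)) (c : C) :
  c \is Num.real ->
  frameop (col_mx X (cmx Y)) = c%:M <->
  [/\ frameop X = c%:M, frameop Y = c%:M, X *m Y^T = 0 & Y *m X^T = 0].
Proof.
move=> cr; rewrite /frameop adjmx_col_mx mul_col_row adjmx_cmx (scalar_mx_block m1 m2 c).
have -> : cmx Y *m adjmx X = cmx (Y *m X^T) by rewrite cmxM cmx_trmx.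
have -> : cmx Y *m Y^T = cmx (Y *m adjmx Y) by rewrite cmxM cmx_adjmx.
split=> [/eq_block_mx[-> -> YX YY] | [-> -> -> ->]]; last by rewrite cmx0 cmx_scalar.
by split=> //; apply: cmx_inj; rewrite ?YX ?YY ?cmx0 ?cmx_scalar.
Qed.

End FrameOperator.

Section Quaternions.
Variables (C : numClosedFieldType) (d n : nat) (v : 'I_n -> 'I_d -> quat C).

Definition qV1 : 'M[C]_(d, n) := \matrix_(i, j) qz (v j i).
Definition qV2 : 'M[C]_(d, n) := \matrix_(i, j) qw (v j i).
Definition qVC : 'M[C]_(d + d, n) := \matrix_(i, j) toC (v j) i ord0.

Lemma qVC_col_mx : qVC = col_mx qV1 (cmx qV2).
Proof.
apply/matrixP=> i j; rewrite /qVC /toC mxE.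
by case: (split_ordP i) => k ->; rewrite ?col_mxEu ?col_mxEd !(mxE, cmxE).
Qed.

Lemma gram_qVC : gram qVC = adjmx qV1 *m qV1 + qV2^T *m cmx qV2.
Proof. by rewrite /gram qVC_col_mx adjmx_col_mx mul_row_col adjmx_cmx. Qed.

Lemma trace_frameop_qVC : \tr (frameop qVC) = \sum_(j < n) hnorm2 (v j).
Proof.
rewrite trace_frameop qVC_col_mx big_split_ord /= /hnorm2.
under [RHS]eq_bigr do rewrite big_split.
rewrite big_split /= [X in _ = X + _]exchange_big.
rewrite [X in _ = _ + X]exchange_big /=.
congr (_ + _); apply: eq_bigr => i _; apply: eq_bigr => j _.
  by rewrite col_mxEu mxE.
by rewrite col_mxEd cmxE mxE norm_conjC.
Qed.

Lemma hnorm2_sum_gt0 : (exists j i, v j i != (0, 0)) -> 0 < \sum_(j < n) hnorm2 (v j).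
Proof.
move=> [j0 [i0 vj0i0]].
have entry_ge0 (q : quat C) : 0 <= `|qz q| ^+ 2 + `|qw q| ^+ 2.
  by rewrite addr_ge0 // exprn_ge0.
have hnorm2_ge0 j : 0 <= hnorm2 (v j) by rewrite sumr_ge0.
rewrite lt_def sumr_ge0 // andbT psumr_neq0 //.
apply/hasP; exists j0; first by rewrite mem_index_enum.
rewrite lt_def hnorm2_ge0 andbT psumr_neq0 //.
apply/hasP; exists i0; first by rewrite mem_index_enum.
rewrite lt_def entry_ge0 andbT paddr_eq0 ?exprn_ge0 // !expf_eq0 /= !normr_eq0.
by move: vj0i0; case: (v j0 i0) => a b; rewrite xpair_eqE negb_and.
Qed.

Lemma Co1_hdot_gram j k : Co1 (hdot (v j) (v k)) = gram qVC k j.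
Proof.
rewrite gram_qVC !mxE /Co1 /hdot.
rewrite (@big_morph _ _ (fun q : quat C => q.1) 0 +%R (qzero C) (@qadd C)) //.
rewrite -big_split; apply: eq_bigr => i _.
by rewrite !(adjmxE, cmxE, mxE) /= mulNr opprK.
Qed.

End Quaternions.

Theorem lemma9 (C : numClosedFieldType) (d n : nat) (v : 'I_n -> 'I_d -> quat C) :
  (exists j i, v j i != (0, 0)) ->
  let V1 : 'M[C]_(d, n) := \matrix_(i, j) qz (v j i) in
  let V2 : 'M[C]_(d, n) := \matrix_(i, j) qw (v j i) in
  let A : C := (d%:R)^-1 * \sum_(j < n) hnorm2 (v j) in
  let VC : 'M[C]_(d + d, n) := \matrix_(i, j) toC (v j) i ord0 in
  let G : 'M[C]_n := adjmx V1 *m V1 + V2^T *m cmx V2 in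
  [/\ tight_frame VC <->
        [/\ V1 *m adjmx V1 = (A / 2)%:M, V2 *m adjmx V2 = (A / 2)%:M,
            V1 *m V2^T = 0 & V2 *m V1^T = 0],
      tight_frame VC <-> G *m G = (A / 2) *: G
    & tight_frame VC <->
        \sum_(j < n) \sum_(k < n) `|Co1 (hdot (v j) (v k))| ^+ 2
        = (2 * d%:R)^-1 * (\sum_(j < n) hnorm2 (v j)) ^+ 2].
Proof.
move=> v_nz V1 V2 A VC G; set N := \sum_(j < n) hnorm2 (v j).
have N_gt0 : 0 < N := hnorm2_sum_gt0 v_nz.
have d_gt0 : (0 < d)%N by case: v_nz => j [i _]; exact: leq_ltn_trans (ltn_ord i).
have dR : (d%:R : C) != 0 by rewrite pnatr_eq0 -lt0n.
have c_gt0 : 0 < A / 2 by rewrite divr_gt0 // mulr_gt0 // invr_gt0 ltr0n.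
have c_real : A / 2 \is Num.real by rewrite gtr0_real.
have trace_VC : \tr (frameop VC) = (d + d)%N%:R * (A / 2).
  by rewrite (trace_frameop_qVC v) /A -/N natrD; field.
have G_gram : G = gram VC := esym (gram_qVC v).
have tight : tight_frame VC <-> frameop VC = (A / 2)%:M.
  by apply: tight_frameE; rewrite ?addn_gt0 ?d_gt0.
split; rewrite tight.
- have VC_blocks : VC = col_mx V1 (cmx V2) := qVC_col_mx v.
  by rewrite VC_blocks; exact: frameop_col_mx_cmx.
- by rewrite G_gram; exact: frameop_scalar_gram_sq.
- under eq_bigr do under eq_bigr do rewrite Co1_hdot_gram.
  rewrite exchange_big.
  have -> : (2 * d%:R)^-1 * N ^+ 2 = (d + d)%N%:R * (A / 2) ^+ 2.
    by rewrite /A natrD -/N; field.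
  exact: frameop_scalar_gram_norm.
Qed.
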